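(* Let $\mathcal{L}_1=(L_1,\nu_1)$ and $\mathcal{L}_2=(L_2,\nu_2)$ be propositional languages with common fragment $\mathcal{L}=(L_1\cap L_2,\nu)$, where $\nu=\nu_1|_{L_1\cap L_2}=\nu_2|_{L_1\cap L_2}$, and let $i_1:\Sigma_{\mathcal{L}}\to\Sigma_{\mathcal{L}_1}$, $i_2:\Sigma_{\mathcal{L}}\to\Sigma_{\mathcal{L}_2}$ be the monoid embeddings sending $\sigma$ to the unique substitution agreeing with $\sigma$ on $\mathrm{Var}$. Then the amalgam $(\Sigma_{\mathcal{L}},i_1,\Sigma_{\mathcal{L}_1},i_2,\Sigma_{\mathcal{L}_2})$ is strongly embeddable in $\Sigma_{\mathcal{L}_1\cup\mathcal{L}_2}$, i.e., there exist injective monoid homomorphisms $j_1:\Sigma_{\mathcal{L}_1}\to\Sigma_{\mathcal{L}_1\cup\mathcal{L}_2}$ and $j_2:\Sigma_{\mathcal{L}_2}\to\Sigma_{\mathcal{L}_1\cup\mathcal{L}_2}$ with $j_1\circ i_1=j_2\circ i_2$ and $j_1[\Sigma_{\mathcal{L}_1}]\cap j_2[\Sigma_{\mathcal{L}_2}]=j_1i_1[\Sigma_{\mathcal{L}}]=j_2i_2[\Sigma_{\mathcal{L}}]$.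
   Context: A propositional language $(L,\nu)$ is a set $L$ of connectives with arity function $\nu:L\to\omega$. Fix a denumerable set $\mathrm{Var}$ of variables; $\mathit{Fm}_{\mathcal{L}}$ is the absolutely free $\mathcal{L}$-algebra over $\mathrm{Var}$ and $\Sigma_{\mathcal{L}}$ is the monoid, under composition, of endomorphisms of $\mathit{Fm}_{\mathcal{L}}$ (substitutions); each substitution is determined by its values on $\mathrm{Var}$. $\mathcal{L}_1\cup\mathcal{L}_2$ is the language $(L_1\cup L_2,\nu_1\cup\nu_2)$. *)

From mathcomp Require Import all_boot.
Set Implicit Arguments. Unset Strict Implicit. Unset Printing Implicit Defensive.

Inductive fm (C : Type) : Type :=
| Var of nat
| App of C & seq (fm C).
Arguments Var {C} _.

Record lang (C : Type) := Lang { conn : pred C ; arity : C -> nat }.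

Fixpoint wf (C : Type) (L : lang C) (t : fm C) : bool :=
  match t with
  | Var _ => true
  | App c ts => [&& conn L c, size ts == arity L c & all (wf L) ts]
  end.

Definition Fm (C : Type) (L : lang C) := {t : fm C | wf L t}.

Definition var (C : Type) (L : lang C) (n : nat) : Fm L :=
  exist (fun t => wf L t) (Var n) isT.

(* the operation of the algebra Fm_L associated with connective c
   (only meaningful when c is in L and args has the right length) *)
Definition appF (C : Type) (L : lang C) (c : C) (args : seq (Fm L)) : Fm L :=
  odflt (var L 0) (insub (App c (map val args))).

Definition is_endo (C : Type) (L : lang C) (f : Fm L -> Fm L) : Prop :=
  forall c (args : seq (Fm L)), conn L c -> size args = arity L c ->
    f (appF c args) = appF c (map f args).

Definition Subst (C : Type) (L : lang C) := {f : Fm L -> Fm L | is_endo f}.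

Lemma is_endo_id (C : Type) (L : lang C) : is_endo (fun t : Fm L => t).
Proof. by move=> c args _ _; rewrite map_id. Qed.

Lemma is_endo_comp (C : Type) (L : lang C) (f g : Fm L -> Fm L) :
  is_endo f -> is_endo g -> is_endo (fun t => f (g t)).
Proof.
move=> hf hg c args hc hs; rewrite hg // hf ?size_map //.
by rewrite -map_comp.
Qed.

Definition sid (C : Type) (L : lang C) : Subst L := exist _ _ (@is_endo_id C L).
Definition scomp (C : Type) (L : lang C) (s t : Subst L) : Subst L :=
  exist _ _ (is_endo_comp (proj2_sig s) (proj2_sig t)).

Definition monoid_hom (C : Type) (L L' : lang C) (j : Subst L -> Subst L') : Prop :=
  j (sid L) = sid L' /\ forall s t, j (scomp s t) = scomp (j s) (j t).

Definition lang_union (C : Type) (L1 L2 : lang C) : lang C :=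
  Lang (predU (conn L1) (conn L2))
       (fun c => if conn L1 c then arity L1 c else arity L2 c).
Definition lang_inter (C : Type) (L1 L2 : lang C) : lang C :=
  Lang (predI (conn L1) (conn L2)) (arity L1).

Definition app_sub (C : Type) (L : lang C) (s : Subst L) (t : Fm L) : Fm L :=
  proj1_sig s t.

From mathcomp Require Import all_boot.
From Stdlib Require Import FunctionalExtensionality ProofIrrelevance.
From Stdlib Require List.
Set Implicit Arguments. Unset Strict Implicit. Unset Printing Implicit Defensive.

(* A substitution is the same thing as an assignment of formulas to the
   variables.  An L-formula is an L'-formula whenever L is a sublanguage of L',
   so j1 and j2 keep the values on the variables; this makes them injective
   monoid homomorphisms that agree on Σ_{L1 ∩ L2}.  If j1 a = j2 b, then a and
   b assign to each variable a formula that is both an L1- and an L2-formula,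
   hence a formula of the common fragment, so a comes from Σ_{L1 ∩ L2}. *)

Section Formulas.
Variable C : Type.

(* The automatic induction principle of [fm] gives no hypothesis for the
   arguments of [App], which sit inside a list. *)
Fixpoint fm_nested_ind (P : fm C -> Prop) (hvar : forall n, P (Var n))
    (happ : forall c ts, (forall t, List.In t ts -> P t) -> P (App c ts))
    (t : fm C) : P t :=
  match t with
  | Var n => hvar n
  | App c ts => happ c ts
      ((fix in_ts (l : seq (fm C)) : forall t, List.In t l -> P t :=
          match l return forall t, List.In t l -> P t with
          | [::] => fun t tl => False_ind _ tl
          | x :: r => fun t tl =>
              match tl with
              | or_introl ex => eq_ind x P (fm_nested_ind hvar happ x) t ex
              | or_intror tr => in_ts r t tr
              end
          end) ts)
  end.

Lemma all_In (T : Type) (p : pred T) (l : seq T) :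
  all p l <-> (forall t, List.In t l -> p t).
Proof. exact: List.forallb_forall. Qed.

Fixpoint fm_subst (s : nat -> fm C) (t : fm C) : fm C :=
  match t with
  | Var n => s n
  | App c ts => App c (map (fm_subst s) ts)
  end.

Lemma eq_fm_subst (s1 s2 : nat -> fm C) (t : fm C) :
  s1 =1 s2 -> fm_subst s1 t = fm_subst s2 t.
Proof.
move=> eq_s; elim/fm_nested_ind: t => [n|c ts IH] /=; first exact: eq_s.
by congr App; apply: List.map_ext_in.
Qed.

Lemma wf_fm_subst (L : lang C) (s : nat -> fm C) (t : fm C) :
  (forall n, wf L (s n)) -> wf L t -> wf L (fm_subst s t).
Proof.
move=> wf_s; elim/fm_nested_ind: t => [n|c ts IH] //= /and3P [Lc /eqP sz wf_ts].
rewrite Lc size_map sz eqxx /=; apply/all_In => u.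
move=> /List.in_map_iff [v [<- v_ts]].
by apply: IH => //; move/all_In: wf_ts; apply.
Qed.

Lemma val_appF (L : lang C) (c : C) (args : seq (Fm L)) :
  conn L c -> size args = arity L c -> val (appF c args) = App c (map val args).
Proof.
move=> Lc sz; rewrite /appF -/(insubd _ _) val_insubd /= Lc size_map sz eqxx /=.
suff -> : all (wf L) (map val args) by [].
by apply/all_In => u /List.in_map_iff [v [<- _]]; apply: valP.
Qed.

Lemma val_endo (L : lang C) (f : Fm L -> Fm L) (x : Fm L) : is_endo f ->
  val (f x) = fm_subst (fun n => val (f (var L n))) (val x).
Proof.
case: x => t + endo_f; elim/fm_nested_ind: t => [n|c ts IH] wf_t.
  by congr (val (f _)); apply: val_inj.
have /= /and3P [Lc /eqP sz wf_ts] := wf_t.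
pose args := pmap (insub : fm C -> option (Fm L)) ts.
have val_args : map val args = ts.
  elim: ts {IH wf_t sz} wf_ts @args => //= t ts IHts /andP [wf_t /IHts].
  by rewrite insubT /= => ->.
have sz_args : size args = arity L c by rewrite -sz -val_args size_map.
have -> : exist (fun t => wf L t) (App c ts) wf_t = appF c args.
  by apply: val_inj; rewrite val_appF // val_args.
rewrite endo_f // val_appF ?size_map //= -map_comp -{1}val_args -map_comp.
congr App; apply: List.map_ext_in => -[u wf_u] u_args /=; apply: IH.
by rewrite -val_args; apply: (List.in_map val _ _ u_args).
Qed.

Lemma val_app_sub (L : lang C) (s : Subst L) (x : Fm L) :
  val (app_sub s x) = fm_subst (fun n => val (app_sub s (var L n))) (val x).
Proof. exact: val_endo (proj2_sig s). Qed.

Lemma eq_Subst (L : lang C) (s t : Subst L) :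
  (forall n, val (app_sub s (var L n)) = val (app_sub t (var L n))) -> s = t.
Proof.
case: s t => [f endo_f] [g endo_g] /= eq_var.
have eq_fg : f = g.
  apply: functional_extensionality => x; apply: val_inj.
  by rewrite (val_endo _ endo_f) (val_endo _ endo_g); apply: eq_fm_subst.
by subst g; congr exist; apply: proof_irrelevance.
Qed.

Section SubstOf.
Variables (L : lang C) (s : nat -> fm C).
Hypothesis wf_s : forall n, wf L (s n).

Definition fm_subst_Fm (x : Fm L) : Fm L :=
  exist _ (fm_subst s (val x)) (wf_fm_subst wf_s (valP x)).

Lemma is_endo_fm_subst_Fm : is_endo fm_subst_Fm.
Proof.
move=> c args Lc sz; apply: val_inj.
by rewrite /= !val_appF ?size_map //= -!map_comp.
Qed.

Definition Subst_of : Subst L := exist _ _ is_endo_fm_subst_Fm.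

Lemma Subst_of_var n : val (app_sub Subst_of (var L n)) = s n.
Proof. by []. Qed.

End SubstOf.

Definition sublang (L L' : lang C) : Prop :=
  forall c, conn L c -> conn L' c /\ arity L' c = arity L c.

Lemma wf_sublang (L L' : lang C) (t : fm C) : sublang L L' -> wf L t -> wf L' t.
Proof.
move=> subLL'; elim/fm_nested_ind: t => [n|c ts IH] //= /and3P [Lc sz wf_ts].
have [-> ->] := subLL' c Lc; rewrite sz /=.
apply/all_In => u u_ts; apply: IH => //.
by move/all_In: wf_ts; apply.
Qed.

Lemma sublang_unionl (L1 L2 : lang C) : sublang L1 (lang_union L1 L2).
Proof. by move=> c L1c; rewrite /= L1c. Qed.

Lemma sublang_unionr (L1 L2 : lang C) :
  (forall c, conn L1 c -> conn L2 c -> arity L1 c = arity L2 c) ->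
  sublang L2 (lang_union L1 L2).
Proof.
move=> arity12 c L2c; rewrite /= L2c orbT; split=> //.
by case: ifP => // L1c; apply: arity12.
Qed.

Lemma wf_lang_inter (L1 L2 : lang C) (t : fm C) :
  wf L1 t -> wf L2 t -> wf (lang_inter L1 L2) t.
Proof.
elim/fm_nested_ind: t => [n|c ts IH] //= /and3P [L1c sz wf1] /and3P [L2c _ wf2].
rewrite L1c L2c sz /=; apply/all_In => u u_ts.
by apply: IH; [| move/all_In: wf1; apply | move/all_In: wf2; apply].
Qed.

Lemma Subst_inter_agree (L1 L2 : lang C) (a : Subst L1) (b : Subst L2) :
  (forall n, val (app_sub a (var L1 n)) = val (app_sub b (var L2 n))) ->
  exists s : Subst (lang_inter L1 L2),
    forall n, val (app_sub s (var _ n)) = val (app_sub a (var L1 n)).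
Proof.
move=> eq_ab.
have wf_a n : wf (lang_inter L1 L2) (val (app_sub a (var L1 n))).
  by apply: wf_lang_inter; [apply: valP | rewrite eq_ab; apply: valP].
by exists (Subst_of wf_a) => n; rewrite Subst_of_var.
Qed.

Section Extension.
Variables L L' : lang C.
Hypothesis subLL' : sublang L L'.

Definition extend_Subst (s : Subst L) : Subst L' :=
  Subst_of (fun n => wf_sublang subLL' (valP (app_sub s (var L n)))).

Lemma extend_Subst_var (s : Subst L) n :
  val (app_sub (extend_Subst s) (var L' n)) = val (app_sub s (var L n)).
Proof. exact: Subst_of_var. Qed.

Lemma extend_Subst_monoid_hom : monoid_hom extend_Subst.
Proof.
split; first by apply: eq_Subst.
move=> s t; apply: eq_Subst => n; exact: (val_app_sub s (app_sub t (var L n))).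
Qed.

Lemma extend_Subst_inj : injective extend_Subst.
Proof. by move=> s t eq_st; apply: eq_Subst => n; rewrite -!extend_Subst_var eq_st. Qed.

End Extension.

Lemma extend_Subst_eqP (L1 L2 L : lang C) (sub1 : sublang L1 L) (sub2 : sublang L2 L)
    (a : Subst L1) (b : Subst L2) :
  extend_Subst sub1 a = extend_Subst sub2 b <->
  forall n, val (app_sub a (var L1 n)) = val (app_sub b (var L2 n)).
Proof.
split=> [eq_ab n | eq_var]; last by apply: eq_Subst.
by rewrite -(extend_Subst_var sub1) eq_ab extend_Subst_var.
Qed.

End Formulas.

Theorem proposition4p2 (C : Type) (L1 L2 : lang C)
  (hnu : forall c, conn L1 c -> conn L2 c -> arity L1 c = arity L2 c)
  (i1 : Subst (lang_inter L1 L2) -> Subst L1)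
  (i2 : Subst (lang_inter L1 L2) -> Subst L2)
  (hi1 : forall s n, val (app_sub (i1 s) (var L1 n))
                     = val (app_sub s (var (lang_inter L1 L2) n)))
  (hi2 : forall s n, val (app_sub (i2 s) (var L2 n))
                     = val (app_sub s (var (lang_inter L1 L2) n))) :
  exists (j1 : Subst L1 -> Subst (lang_union L1 L2))
         (j2 : Subst L2 -> Subst (lang_union L1 L2)),
    [/\ monoid_hom j1 /\ injective j1, monoid_hom j2 /\ injective j2,
        (forall s, j1 (i1 s) = j2 (i2 s)) &
        (forall u, ((exists a, u = j1 a) /\ (exists b, u = j2 b)) <->
                   (exists s, u = j1 (i1 s)))].
Proof.
pose j1 := extend_Subst (@sublang_unionl C L1 L2).
pose j2 := extend_Subst (sublang_unionr hnu).
have j12 s : j1 (i1 s) = j2 (i2 s).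
  by apply/extend_Subst_eqP => n; rewrite hi1 hi2.
exists j1, j2; split=> //.
- by split; [apply: extend_Subst_monoid_hom | apply: extend_Subst_inj].
- by split; [apply: extend_Subst_monoid_hom | apply: extend_Subst_inj].
move=> u; split=> [[[a ->] [b /extend_Subst_eqP eq_ab]] | [s ->]]; last first.
  by split; [exists (i1 s) | exists (i2 s)].
have [s a_s] := Subst_inter_agree eq_ab.
by exists s; apply: eq_Subst => n; rewrite !extend_Subst_var hi1 a_s.
Qed.
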